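(* Let $\beta\in(0,1)$ and $\alpha=\frac{p}{n}\beta$. Suppose (A5) holds, CLARSTA has run for $K+1$ iterations with $\Delta_k\ge\Delta_{\min}$ for all $k\le K$, and $K\ge\overline{k}$. Then $$\left|\mathcal{A}_{[\overline{k},K]}\setminus\mathcal{S}_{[\overline{k},K]}\right|\le\ln(1/\gamma_{\mathrm{dec}})^{-1}\ln(\Delta_{\overline{k}}/\Delta_{\min}).$$
   Context: Problem: minimize $f:\mathbb{R}^n\to\mathbb{R}$ over $\mathcal{C}\subseteq\mathbb{R}^n$, closed convex with nonempty interior. $\|\cdot\|$ Euclidean/spectral norm; $\mathrm{proj}_{\mathcal{C}}$ Euclidean projection; $\sigma_{\min}$ smallest singular value. For $\boldsymbol{x}\in\mathcal{C}$, $\pi^f(\boldsymbol{x})=\left|\min_{\boldsymbol{d}\in\mathcal{C}-\boldsymbol{x},\|\boldsymbol{d}\|\le1}\nabla f(\boldsymbol{x})^\top\boldsymbol{d}\right|$ ($f$ differentiable). QR-factorizations have orthonormal-column $\boldsymbol{Q}$. A matrix $\boldsymbol{A}\in\mathbb{R}^{n\times z}$ with QR $\boldsymbol{A}=\boldsymbol{Q}\boldsymbol{R}$ is $\alpha$-well-aligned for $f$ and $\mathcal{C}$ at $\boldsymbol{x}$ if $|\min_{\boldsymbol{d}\in\mathcal{C}-\boldsymbol{x},\|\boldsymbol{d}\|\le1}\nabla f(\boldsymbol{x})^\top\boldsymbol{Q}\boldsymbol{Q}^\top\boldsymbol{d}|\ge\alpha\pi^f(\boldsymbol{x})$. Algorithm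 CLARSTA. Parameters: integers $1\le p_{\mathrm{rand}}\le p\le n$; $\boldsymbol{x}_0\in\mathcal{C}$; $\Delta_0>0$; $0<\Delta_{\min}\le\Delta_{\max}$; $\gamma_{\mathrm{dec}}\in(0,1)$; a prescribed sequence $\gamma_{\mathrm{inc}}^k\ge1$; $0<\eta_1\le\eta_2<1$; $\mu>0$; $\epsilon_{\mathrm{rad}}\ge1$; $\epsilon_{\mathrm{geo}}>0$. GEN$(q,\Delta,\boldsymbol{Q})$ ($\boldsymbol{Q}$ optional, orthonormal columns): draw $\boldsymbol{A}\in\mathbb{R}^{n\times q}$ with i.i.d. $\mathcal{N}(0,1)$ entries, of full column rank; $\widetilde{\boldsymbol{A}}=\boldsymbol{A}-\boldsymbol{Q}\boldsymbol{Q}^\top\boldsymbol{A}$ if $\boldsymbol{Q}$ given, else $\boldsymbol{A}$; QR $\widetilde{\boldsymbol{A}}=[\widetilde{\boldsymbol{q}}_1\cdots\widetilde{\boldsymbol{q}}_q]\widetilde{\boldsymbol{R}}$; return $\Delta\widetilde{\boldsymbol{q}}_1,\dots,\Delta\widetilde{\boldsymbol{q}}_q$. REMOVE$(\boldsymbol{D}^U,\Delta,r)$: repeat $r$ times: for $\boldsymbol{D}^U=[\boldsymbol{d}_1\cdots\boldsymbol{d}_m]$ let $\boldsymbol{M}_i$ be $\boldsymbol{D}^U$ without column $i$, $\theta_i=\sigma_{\min}(\boldsymbol{M}_i)\max(\|\boldsymbol{d}_i\|^4/\Delta^4,1)$; delete the column with largest $\theta_i$. Initialization: $\boldsymbol{D}_0$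 = columns GEN$(p,\Delta_0)$. Iteration $k$: QR $\boldsymbol{D}_k=[\boldsymbol{d}_1\cdots\boldsymbol{d}_p]=\boldsymbol{Q}_k\boldsymbol{R}_k$, $\boldsymbol{R}_k=[\boldsymbol{r}_1\cdots\boldsymbol{r}_p]$; $\widehat f_k(\widehat{\boldsymbol{s}})=f(\boldsymbol{x}_k+\boldsymbol{Q}_k\widehat{\boldsymbol{s}})$; $\widehat m_k(\widehat{\boldsymbol{s}})=\widehat f_k(\boldsymbol{0}_p)+\boldsymbol{g}_k^\top\widehat{\boldsymbol{s}}$, $\boldsymbol{g}_k=(\boldsymbol{R}_k^\top)^{-1}\boldsymbol{\delta}_k$, $(\boldsymbol{\delta}_k)_i=\widehat f_k(\boldsymbol{r}_i)-\widehat f_k(\boldsymbol{0}_p)$; $\pi^m(\boldsymbol{x}_k)=\left|\min_{\boldsymbol{d}\in\boldsymbol{Q}_k^\top(\mathcal{C}-\boldsymbol{x}_k),\|\boldsymbol{d}\|\le1}\nabla\widehat m_k(\boldsymbol{0}_p)^\top\boldsymbol{d}\right|$ with $\boldsymbol{Q}_k^\top(\mathcal{C}-\boldsymbol{x}_k)=\{\boldsymbol{Q}_k^\top(\boldsymbol{z}-\boldsymbol{x}_k):\boldsymbol{z}\in\mathcal{C}\}$. If $\Delta_k\le\mu\pi^m(\boldsymbol{x}_k)$ (model accuracy test satisfied): approximately solve $\min\{\widehat m_k(\widehat{\boldsymbol{s}}):\widehat{\boldsymbol{s}}\in\boldsymbol{Q}_k^\top\mathcal{C},\|\widehat{\boldsymbol{s}}\|\le\Delta_k\}$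 giving $\widehat{\boldsymbol{s}}_k$; $\boldsymbol{s}_k=\mathrm{proj}_{\mathcal{C}}(\boldsymbol{x}_k+\boldsymbol{Q}_k\widehat{\boldsymbol{s}}_k)-\boldsymbol{x}_k$; $\rho_k=\frac{f(\boldsymbol{x}_k)-f(\boldsymbol{x}_k+\boldsymbol{s}_k)}{\widehat m_k(\boldsymbol{0}_p)-\widehat m_k(\widehat{\boldsymbol{s}}_k)}$; $\Delta_{k+1}=\gamma_{\mathrm{dec}}\Delta_k$ if $\rho_k<\eta_1$, $\min(\gamma^k_{\mathrm{inc}}\Delta_k,\Delta_{\max})$ if $\rho_k>\eta_2$, $\Delta_k$ otherwise; $\boldsymbol{x}_{k+1}$ any point of $\mathcal{C}$ with $f(\boldsymbol{x}_{k+1})\le\min(\{f(\boldsymbol{x}_k+\boldsymbol{s}_k)\}\cup\{f(\boldsymbol{x}_k+\boldsymbol{d}_i+\boldsymbol{d}_j):\boldsymbol{x}_k+\boldsymbol{d}_i+\boldsymbol{d}_j\in\mathcal{C},\ \boldsymbol{d}_i,\boldsymbol{d}_j\text{ columns of }[\boldsymbol{0}_n\ \boldsymbol{D}_k]\})$; $\boldsymbol{D}^U_{k+1}$: select $p$ linearly independent directions among $\boldsymbol{x}_k+\boldsymbol{s}_k-\boldsymbol{x}_{k+1}$ and $\boldsymbol{x}_k+\boldsymbol{d}_i+\boldsymbol{d}_j-\boldsymbol{x}_{k+1}$, apply REMOVE$(\cdot,\Delta_{k+1},p_{\mathrm{rand}})$, delete columns of norm $>\epsilon_{\mathrm{rad}}\Delta_{k+1}$,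 while nonempty with $\sigma_{\min}<\epsilon_{\mathrm{geo}}$ apply REMOVE$(\cdot,\Delta_{k+1},1)$, optionally remove more; with $p_1$ remaining columns, $\boldsymbol{D}^R_{k+1}$ = GEN$(p-p_1,\Delta_{k+1},$ orthonormal basis of column space of $\boldsymbol{D}^U_{k+1})$, $\boldsymbol{D}_{k+1}=[\boldsymbol{D}^U_{k+1}\ \boldsymbol{D}^R_{k+1}]$. Otherwise: $\Delta_{k+1}=\gamma_{\mathrm{dec}}\Delta_k$, $\boldsymbol{x}_{k+1}=\boldsymbol{x}_k$, $\boldsymbol{D}_{k+1}=\gamma_{\mathrm{dec}}\boldsymbol{D}_k$. Stop if $\Delta_{k+1}<\Delta_{\min}$. (A5): there is an integer $\overline{k}\ge0$ with $\gamma^k_{\mathrm{inc}}=1$ for all $k\ge\overline{k}$. For $0\le K_1\le K_2\le K$: $\mathcal{A}_{[K_1,K_2]}$ is the set of $k\in\{K_1,\dots,K_2\}$ with $\boldsymbol{D}_k$ $\alpha$-well-aligned for $f$ and $\mathcal{C}$ at $\boldsymbol{x}_k$; $\mathcal{S}_{[K_1,K_2]}$ is the set of $k\in\{K_1,\dots,K_2\}$ where the model accuracy test holds and $\rho_k\ge\eta_1$.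
   Formalization: The bound $\Delta_k\ge\Delta_{\min}$ is assumed for every k ≤ K+1 rather than only k ≤ K, so the stopping test $\Delta_{k+1}<\Delta_{\min}$ does not fire at iteration K either. Apart from conventions, each condition added here is assumed in the paper as well or is needed for the statement above to hold. *)

From HB Require Import structures.
From mathcomp Require Import all_boot all_order all_algebra.
From mathcomp Require Import all_classical all_reals all_analysis.
Set Implicit Arguments. Unset Strict Implicit. Unset Printing Implicit Defensive.
Import Order.TTheory GRing.Theory Num.Theory.
Import numFieldNormedType.Exports.
Local Open Scope classical_set_scope.
Local Open Scope ring_scope.

Section CLARSTA.
Variable R : realType.

Definition dotv (m : nat) (u v : 'cV[R]_m) : R := \sum_(i < m) u i ord0 * v i ord0.
Definition enorm (m : nat) (v : 'cV[R]_m) : R := Num.sqrt (dotv v v).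

(* pi^f(x) = | min_{d in C - x, ||d|| <= 1} grad f(x)^T d |, with grad f(x)^T d = 'd f x d *)
Definition pi_f (n : nat) (C : set 'cV[R]_n) (f : 'cV[R]_n -> R) (x : 'cV[R]_n) : R :=
  `| inf [set ('d f x : 'cV[R]_n -> R) d | d in [set d | C (x + d) /\ enorm d <= 1]] |.

Definition well_aligned (n z : nat) (C : set 'cV[R]_n) (f : 'cV[R]_n -> R)
  (x : 'cV[R]_n) (Q : 'M[R]_(n, z)) (alpha : R) : Prop :=
  `| inf [set ('d f x : 'cV[R]_n -> R) (Q *m Q^T *m d)
          | d in [set d | C (x + d) /\ enorm d <= 1]] | >= alpha * pi_f C f x.

Definition QR_fact (n p : nat) (D Q : 'M[R]_(n, p)) (Rm : 'M[R]_p) : Prop :=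
  [/\ D = Q *m Rm, Q^T *m Q = 1%:M, (forall i j : 'I_p, (j < i)%N -> Rm i j = 0)
    & Rm \in unitmx].

Definition model_grad (n p : nat) (f : 'cV[R]_n -> R) (x : 'cV[R]_n)
  (Q : 'M[R]_(n, p)) (Rm : 'M[R]_p) : 'cV[R]_p :=
  invmx (Rm^T) *m (\col_(i < p) (f (x + Q *m col i Rm) - f x)).

Definition pi_m (n p : nat) (C : set 'cV[R]_n) (x : 'cV[R]_n) (Q : 'M[R]_(n, p))
  (g : 'cV[R]_p) : R :=
  `| inf [set dotv g d | d in
        [set d | (exists z, C z /\ d = Q^T *m (z - x)) /\ enorm d <= 1]] |.

(* columns of [0_n D] indexed by option 'I_p (None = the zero column) *)
Definition colz (n p : nat) (D : 'M[R]_(n, p)) (o : option 'I_p) : 'cV[R]_n :=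
  match o with None => 0 | Some i => col i D end.

(* one realisation of K+1 iterations (k = 0..K) of CLARSTA *)
Definition clarsta_run (n p : nat) (C : set 'cV[R]_n) (f : 'cV[R]_n -> R)
  (Dmax gdec : R) (ginc : nat -> R) (eta1 eta2 mu : R)
  (x : nat -> 'cV[R]_n) (Delta : nat -> R) (D Q : nat -> 'M[R]_(n, p))
  (Rm : nat -> 'M[R]_p) (shat : nat -> 'cV[R]_p) (s : nat -> 'cV[R]_n)
  (rho : nat -> R) (K : nat) : Prop :=
  C (x 0%N) /\ 0 < Delta 0%N /\
  forall k, (k <= K)%N ->
    let g := model_grad f (x k) (Q k) (Rm k) in
    QR_fact (D k) (Q k) (Rm k) /\
    (Delta k <= mu * pi_m C (x k) (Q k) g ->
       [/\ enorm (shat k) <= Delta k,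
           C (x k + s k) /\ (forall z, C z ->
              enorm (x k + Q k *m shat k - (x k + s k)) <= enorm (x k + Q k *m shat k - z)),
           rho k = (f (x k) - f (x k + s k)) / (f (x k) - (f (x k) + dotv g (shat k))),
           [/\ rho k < eta1 -> Delta k.+1 = gdec * Delta k,
               rho k > eta2 -> Delta k.+1 = Num.min (ginc k * Delta k) Dmax &
               eta1 <= rho k <= eta2 -> Delta k.+1 = Delta k] &
           C (x k.+1) /\ f (x k.+1) <= f (x k + s k) /\
           (forall i j : option 'I_p, C (x k + colz (D k) i + colz (D k) j) ->
               f (x k.+1) <= f (x k + colz (D k) i + colz (D k) j))]) /\
    (~ (Delta k <= mu * pi_m C (x k) (Q k) g) ->
       [/\ Delta k.+1 = gdec * Delta k, x k.+1 = x k & D k.+1 = gdec *: D k]).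

Definition acc_test (n p : nat) (C : set 'cV[R]_n) (f : 'cV[R]_n -> R) (mu : R)
  (x : nat -> 'cV[R]_n) (Delta : nat -> R) (Q : nat -> 'M[R]_(n, p))
  (Rm : nat -> 'M[R]_p) (k : nat) : Prop :=
  Delta k <= mu * pi_m C (x k) (Q k) (model_grad f (x k) (Q k) (Rm k)).

End CLARSTA.

From HB Require Import structures.
From mathcomp Require Import all_boot all_order all_algebra.
From mathcomp Require Import all_classical all_reals all_analysis.
Set Implicit Arguments.
Unset Strict Implicit.
Unset Printing Implicit Defensive.
Import Order.TTheory GRing.Theory Num.Theory.
Import numFieldNormedType.Exports.
Local Open Scope classical_set_scope.
Local Open Scope ring_scope.

(* Only the unsuccessful iterations matter: A \ S is contained in the set of
   unsuccessful iterations.  Each of these multiplies the trust-region radius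
   by gdec, and after kbar (A5) no iteration increases it.  Hence
   Dmin <= Delta (K+1) <= gdec^N Delta kbar with N the number of unsuccessful
   iterations in [kbar, K], and taking logarithms bounds N. *)

Lemma le_expr_count_mul (R : numDomainType) (u : nat -> R) (g : R)
    (P : pred nat) (m n : nat) :
  0 <= g -> (m <= n)%N ->
  (forall k, (m <= k < n)%N -> u k.+1 <= (if P k then g else 1) * u k) ->
  u n <= g ^+ (\sum_(m <= k < n) P k) * u m.
Proof.
move=> g_ge0; elim: n => [|n IHn].
  by rewrite leqn0 => /eqP-> _; rewrite big_geq // mul1r.
rewrite leq_eqVlt => /orP[/eqP-> _|]; first by rewrite big_geq // mul1r.
rewrite ltnS => le_mn step; rewrite big_nat_recr //= exprD.
apply: le_trans (step n _) _; first by rewrite le_mn leqnn.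
have le_un : u n <= g ^+ (\sum_(m <= k < n) P k) * u m.
  apply: IHn => // k /andP[le_mk lt_kn]; apply: step.
  by rewrite le_mk ltnS ltnW.
case: (P n); last by rewrite mul1r expr0 mulr1.
by rewrite expr1 [_ * g]mulrC -mulrA ler_wpM2l.
Qed.

Lemma natr_le_ln_ratio (R : realType) (g a b : R) (N : nat) :
  0 < g < 1 -> 0 < b -> b <= g ^+ N * a ->
  N%:R <= (ln (1 / g))^-1 * ln (a / b).
Proof.
move=> /andP[g_gt0 g_lt1] b_gt0 le_b.
have gN_gt0 : 0 < g ^+ N by rewrite exprn_gt0.
have a_gt0 : 0 < a by rewrite -(pmulr_rgt0 _ gN_gt0) (lt_le_trans b_gt0).
have lng_gt0 : 0 < ln (1 / g) by rewrite ln_gt0 // div1r invf_gt1.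
have le_pow : (1 / g) ^+ N <= a / b.
  by rewrite ler_pdivlMr // div1r exprVn ler_pdivrMl.
rewrite -(ler_pM2l lng_gt0) mulrA mulfV ?gt_eqF // [1 * ln _]mul1r.
rewrite mulr_natr -lnXn ?divr_gt0 //.
by rewrite ler_ln ?posrE ?exprn_gt0 ?divr_gt0.
Qed.

Section RadiusUpdate.
Variables (R : realType) (n p : nat) (C : set 'cV[R]_n) (f : 'cV[R]_n -> R).
Variables (Dmax gdec : R) (ginc : nat -> R) (eta1 eta2 mu : R).
Variables (x : nat -> 'cV[R]_n) (Delta : nat -> R) (D Q : nat -> 'M[R]_(n, p)).
Variables (Rm : nat -> 'M[R]_p) (shat : nat -> 'cV[R]_p) (s : nat -> 'cV[R]_n).
Variables (rho : nat -> R) (K : nat).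
Hypothesis run :
  clarsta_run C f Dmax gdec ginc eta1 eta2 mu x Delta D Q Rm shat s rho K.

Definition successful (k : nat) : Prop :=
  acc_test C f mu x Delta Q Rm k /\ eta1 <= rho k.

Lemma unsuccessful_radius_shrinks k :
  (k <= K)%N -> ~ successful k -> Delta k.+1 = gdec * Delta k.
Proof.
move=> le_kK unsucc; have [_ [_ /(_ k le_kK) [_ [accurate inaccurate]]]] := run.
have [acc|nacc] := pselect (acc_test C f mu x Delta Q Rm k); last first.
  by have [] := inaccurate nacc.
have [_ _ _ [shrink _ _] _] := accurate acc.
by apply: shrink; rewrite ltNge; apply/negP => le_eta1; apply: unsucc.
Qed.

Lemma successful_radius_nonincreasing k :
  (k <= K)%N -> ginc k = 1 -> successful k -> Delta k.+1 <= Delta k.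
Proof.
move=> le_kK ginc1 [acc le_eta1]; have [_ [_ /(_ k le_kK) [_ [accurate _]]]] := run.
have [_ _ _ [_ expand keep] _] := accurate acc.
have [lt_eta2|le_eta2] := ltP eta2 (rho k).
  by rewrite expand // ginc1 mul1r ge_min lexx.
by rewrite keep ?le_eta1.
Qed.

Lemma radius_step k : (k <= K)%N -> ginc k = 1 ->
  Delta k.+1 <= (if ~~ `[< successful k >] then gdec else 1) * Delta k.
Proof.
move=> le_kK ginc1; case: asboolP => [succ|unsucc] /=.
  by rewrite mul1r successful_radius_nonincreasing.
by rewrite unsuccessful_radius_shrinks.
Qed.

End RadiusUpdate.

Theorem mainTheorem14 (R : realType) (n p prand : nat) (C : set 'cV[R]_n)
  (f : 'cV[R]_n -> R)
  (Dmin Dmax gdec : R) (ginc : nat -> R) (eta1 eta2 mu erad egeo beta : R)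
  (x : nat -> 'cV[R]_n) (Delta : nat -> R) (D Q : nat -> 'M[R]_(n, p))
  (Rm : nat -> 'M[R]_p) (shat : nat -> 'cV[R]_p) (s : nat -> 'cV[R]_n)
  (rho : nat -> R) (kbar K : nat) :
  (* standing assumptions *)
  closed C -> convex_set C -> interior C !=set0 ->
  (forall z, differentiable f z) ->
  (* parameters *)
  (1 <= prand)%N -> (prand <= p)%N -> (p <= n)%N ->
  0 < Dmin -> Dmin <= Dmax -> 0 < gdec < 1 -> (forall k, 1 <= ginc k) ->
  0 < eta1 -> eta1 <= eta2 -> eta2 < 1 -> 0 < mu -> 1 <= erad -> 0 < egeo ->
  0 < beta < 1 ->
  (* (A5) *)
  (forall k, (kbar <= k)%N -> ginc k = 1) ->
  (* CLARSTA ran K+1 iterations (k = 0..K) without terminating *)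
  clarsta_run C f Dmax gdec ginc eta1 eta2 mu x Delta D Q Rm shat s rho K ->
  (forall k, (k <= K.+1)%N -> Dmin <= Delta k) ->
  (kbar <= K)%N ->
  let alpha := (p%:R / n%:R) * beta in
  let inA k := well_aligned C f (x k) (Q k) alpha in
  let inS k := acc_test C f mu x Delta Q Rm k /\ eta1 <= rho k in
  ((\sum_(kbar <= k < K.+1) (if `[< inA k /\ ~ inS k >] then 1 else 0))%N%:R : R)
    <= (ln (1 / gdec))^-1 * ln (Delta kbar / Dmin).
Proof.
move=> _ _ _ _ _ _ _ Dmin_gt0 _ gdec01 _ _ _ _ _ _ _ _ A5 run Dmin_le le_kbarK.
cbv zeta.
pose unsucc k := ~~ `[< successful C f eta1 mu x Delta Q Rm rho k >].
have decay : Delta K.+1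
    <= gdec ^+ (\sum_(kbar <= k < K.+1) unsucc k) * Delta kbar.
  apply: le_expr_count_mul; [by case/andP: gdec01 => /ltW|exact: leqW|].
  move=> k /andP[le_kbar_k lt_kK].
  by apply: (radius_step run); rewrite ?A5.
have Dmin_le_decay := le_trans (Dmin_le _ (leqnn _)) decay.
apply: le_trans (natr_le_ln_ratio gdec01 Dmin_gt0 Dmin_le_decay).
rewrite ler_nat; apply: leq_sum => k _.
case: asboolP => [[_ not_succ]|_]; last exact: leq0n.
rewrite /unsucc; case: asboolP => [succ|//].
by case: (not_succ succ).
Qed.
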